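(* For every elliptic curve $E$ over $\mathbb{F}_q$ and every integer $n\geq 1$, the quantity $q^n+1-a_{E/\mathbb{F}_q;n}$ is nonzero and $$a_{E/\mathbb{F}_q;n+1}=1-q^n+a_{E/\mathbb{F}_q}+\frac{(q^n-q)(q^n-1)}{q^n+1-a_{E/\mathbb{F}_q;n}}.$$ In particular $a_{E/\mathbb{F}_q;2}=1-q+a_{E/\mathbb{F}_q}$.
   Context: Let $E$ be an elliptic curve over the finite field $\mathbb{F}_q$, and $a_{E/\mathbb{F}_q}:=q+1-\#E(\mathbb{F}_q)$. For $m\geq 1$ put $\beta_{E/\mathbb{F}_q;m}(0):=\sum_{\mathcal V}\frac{1}{\#\mathrm{Aut}(\mathcal V)}$, where $\mathcal V$ runs over isomorphism classes of semi-stable vector bundles of rank $m$ and degree $0$ on $E$; set $\beta_{E/\mathbb{F}_q;0}(0):=1$, $\beta_{E/\mathbb{F}_q;-1}(0):=0$. Define $a_{E/\mathbb{F}_q;n}:=(q^n+1)-(q^n-1)\frac{\beta_{E/\mathbb{F}_q;n}(0)}{\beta_{E/\mathbb{F}_q;n-1}(0)}$. Known background fact (Weng–Zagier): for all $m\geq1$, $(q^m-1)\beta_{E/\mathbb{F}_q;m}(0)=(q^m+q^{m-1}-a_{E/\mathbb{F}_q})\beta_{E/\mathbb{F}_q;m-1}(0)-(q^{m-1}-q)\beta_{E/\mathbb{F}_q;m-2}(0)$. *)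

From mathcomp Require Import all_boot all_order all_algebra.
Set Implicit Arguments. Unset Strict Implicit. Unset Printing Implicit Defensive.
Import Order.TTheory GRing.Theory Num.Theory.
Local Open Scope ring_scope.

(* The semi-stable invariants beta_{E/F_q;m}(0) are modelled by a sequence
   beta : nat -> R, beta m = beta_{E/F_q;m}(0) for m >= 0.
   [beta_prev beta m] is beta_{E/F_q; m-1}(0), with the convention
   beta_{E/F_q;-1}(0) = 0. *)
Definition beta_prev (R : ringType) (beta : nat -> R) (m : nat) : R :=
  if m is m'.+1 then beta m' else 0.

Definition WZ_recursion (R : ringType) (q : nat) (a : int) (beta : nat -> R) :=
  forall m : nat, (0 < m)%N ->
    ((q ^ m)%:R - 1) * beta m =
      ((q ^ m)%:R + (q ^ m.-1)%:R - a%:~R) * beta m.-1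
      - ((q ^ m.-1)%:R - q%:R) * beta_prev beta m.-1.

Definition a_n (R : fieldType) (q : nat) (beta : nat -> R) (n : nat) : R :=
  ((q ^ n)%:R + 1) - ((q ^ n)%:R - 1) * (beta n / beta_prev beta n).

From mathcomp Require Import all_boot all_order all_algebra.
From mathcomp Require Import ring.
Set Implicit Arguments. Unset Strict Implicit. Unset Printing Implicit Defensive.
Import Order.TTheory GRing.Theory Num.Theory.
Local Open Scope ring_scope.

(* Write [Q = q^n] and [r_n = beta_n / beta_(n-1)].  By definition
   [Q + 1 - a_n = (Q - 1) r_n], while the Weng--Zagier recursion at [n+1]
   reads [(q Q - 1) r_(n+1) = q Q + Q - a - (Q - q) / r_n].  Substituting
   the second identity into the definition of [a_(n+1)] and the first into
   [1 / r_n] gives the recursion; for [n = 1] the correction term has the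
   factor [Q - q = 0]. *)

Lemma a_n_complementE (R : fieldType) (q : nat) (beta : nat -> R) (n : nat) :
  (q ^ n)%:R + 1 - a_n q beta n = ((q ^ n)%:R - 1) * (beta n / beta_prev beta n).
Proof. by rewrite /a_n; ring. Qed.

Lemma a_nS_WZ (R : fieldType) (q : nat) (a : int) (beta : nat -> R) (n : nat) :
  WZ_recursion q a beta -> beta n != 0 ->
  a_n q beta n.+1 =
    1 - (q ^ n)%:R + a%:~R + ((q ^ n)%:R - q%:R) * (beta_prev beta n / beta n).
Proof.
move=> wz beta_n_neq0; have /= WZn := wz n.+1 isT.
rewrite /a_n /= mulrA WZn; field.
by rewrite beta_n_neq0.
Qed.

Lemma a_nS_recursion (R : fieldType) (q : nat) (a : int) (beta : nat -> R) (n : nat) :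
  WZ_recursion q a beta -> beta n != 0 -> beta_prev beta n != 0 ->
  (q ^ n)%:R != 1 :> R ->
  a_n q beta n.+1 =
    1 - (q ^ n)%:R + a%:~R
    + ((q ^ n)%:R - q%:R) * ((q ^ n)%:R - 1) / ((q ^ n)%:R + 1 - a_n q beta n).
Proof.
move=> wz beta_n_neq0 beta_prev_neq0 Q_neq1.
rewrite (a_nS_WZ wz beta_n_neq0) a_n_complementE; field.
by rewrite beta_n_neq0 beta_prev_neq0 subr_eq0 Q_neq1.
Qed.

Theorem mainTheorem2 (R : realFieldType) (q : nat) (a : int) (beta : nat -> R) :
  (1 < q)%N -> (exists p k, prime p /\ q = (p ^ k)%N) ->
  (* Hasse bound for a = q + 1 - #E(F_q) *)
  a ^+ 2 <= 4 * q%:Z ->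
  beta 0%N = 1 ->
  (forall m, 0 < beta m) ->
  WZ_recursion q a beta ->
  (forall n : nat, (0 < n)%N ->
     (q ^ n)%:R + 1 - a_n q beta n != 0 /\
     a_n q beta n.+1 =
       1 - (q ^ n)%:R + a%:~R
       + ((q ^ n)%:R - q%:R) * ((q ^ n)%:R - 1) / ((q ^ n)%:R + 1 - a_n q beta n))
  /\ a_n q beta 2 = 1 - q%:R + a%:~R.
Proof.
move=> q_gt1 _ _ _ beta_gt0 wz.
have beta_neq0 m : beta m != 0 by rewrite gt_eqF.
split=> [[//|n] _|]; last by rewrite (a_nS_WZ (n:=1) wz) // expn1 subrr mul0r addr0.
have Q_gt1 : (1 : R) < (q ^ n.+1)%:R by rewrite ltr1n -[1%N](expn0 q) ltn_exp2l.
split; last by rewrite (a_nS_recursion wz) ?beta_neq0 // gt_eqF.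
rewrite a_n_complementE !mulf_neq0 ?invr_neq0 //; last exact: beta_neq0.
by rewrite lt0r_neq0 // subr_gt0.
Qed.
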